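(* Let $f$ satisfy the Standing Assumption below and let $E_*\in J$ with $E_*=f_-(\theta_-)=f_+(\theta_+)$, $\theta_\pm\in I_\pm$. If $\|T_f(E_* )\|_{\mathbb{T}}\ge 7\nu/d$, then $|\partial_\theta f_\pm(\theta_\pm)|\ge\nu$ for both signs.
   Context: Standing Assumption: $I_-,I_+\subset\mathbb{T}$ are closed intervals with disjoint interiors, $I=I_-\cup I_+$, $J\subset\mathbb{R}$ is a closed interval, and $f:I\to J$ is $C^2$ with $f_\pm:=f|_{I_\pm}$ satisfying $\pm\partial_\theta f_\pm\ge 0$. Moreover: (1) $d\le|\partial_\theta f|+|\partial_\theta^2 f|\le D$ on $I$ for constants $0<d\le D$; (2) $f_\pm(I_\pm)=J$; (3) there is a constant $0<\nu<d/2$ with $|\partial_\theta f|\ge\nu$ at the boundary points of $I$. By (2) and monotonicity, the inverses $f_\pm^{-1}:J\to I_\pm$ are defined, and $T_f:J\to I_+-I_-$ is $T_f(E)=f_+^{-1}(E)-f_-^{-1}(E)$. $\|x\|_{\mathbb{T}}$ denotes distance to the nearest integer. *)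

From Stdlib Require Import Reals Lra ZArith.
From Coquelicot Require Import Coquelicot.
Open Scope R_scope.

Definition normT (x : R) : R := Rmin (frac_part x) (1 - frac_part x).

(* Membership of a real x (a lift of a point of T = R/Z) in the projection
   to T of the real interval [a, b]. *)
Definition inArc (a b x : R) : Prop := exists k : Z, a <= x + IZR k <= b.

Definition inArcInt (a b x : R) : Prop := exists k : Z, a < x + IZR k < b.

(* I = I_- u I_+ ⊂ T, with I_- = proj [am,bm], I_+ = proj [ap,bp]. *)
Definition inI (am bm ap bp x : R) : Prop := inArc am bm x \/ inArc ap bp x.

(* x is a boundary point of I (topological boundary in T, I being closed). *)
Definition bdI (am bm ap bp x : R) : Prop :=
  inI am bm ap bp x /\
  forall eps : R, 0 < eps -> exists y : R, Rabs (y - x) < eps /\ ~ inI am bm ap bp y.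

From Stdlib Require Import Reals Lra Lia ZArith Classical.
From Coquelicot Require Import Coquelicot.
Open Scope R_scope.

(* Write m = d - nu > nu and t = nu / m.  Where |f'| < nu, hypothesis (1)
   gives |f''| > m, so the slope moves at rate > m and needs time >= t to
   change by nu.  Suppose |f'(theta_-)| < nu and, after a reflection, that
   f''(theta_-) > 0.  A "barrier" argument shows that to the right of
   theta_- the slope increases at rate m while it stays in (-nu, nu); since
   f' <= 0 on I_-, the right end of I_- is reached within time t, with f
   having dropped by less than nu t / 2.  By hypothesis (3) that end is an
   interior point of I, so it is the left end of I_+, a critical point.
   Climbing from there, f regains nu t / 2 within time 5/2 t (or I_+ ends
   earlier), so E_* has a preimage in I_+ within 7/2 t < 7 nu / d of
   theta_-; since f_+ is injective this preimage is theta_+, a contradiction.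
   The bound at theta_+ follows by the reflection exchanging I_- and I_+. *)

Lemma continuous_of_is_derive (g : R -> R) (x l : R) :
  is_derive g x l -> continuous g x.
Proof.
  intros H. apply (@ex_derive_continuous R_AbsRing R_NormedModule). exists l; exact H.
Qed.

Lemma continuous_ball (h : R -> R) (x eps : R) : continuous h x -> 0 < eps ->
  exists del, 0 < del /\ forall y, Rabs (y - x) < del -> Rabs (h y - h x) < eps.
Proof.
  intros Hc He.
  destruct (proj1 (filterlim_locally h (h x)) Hc (mkposreal eps He)) as [del Hd].
  exists (pos del). split; [apply cond_pos|]. intros y Hy. exact (Hd y Hy).
Qed.

Lemma lower_bound_at_left_limit (h : R -> R) (a z c : R) :
  continuous h z -> a < z -> (forall y, a <= y < z -> c < h y) -> c <= h z.
Proof.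
  intros Hc Haz Hlow. apply Rnot_lt_le. intros Hlt.
  destruct (continuous_ball h z (c - h z) Hc ltac:(lra)) as [del [Hdel Hball]].
  set (y := Rmax a (z - del / 2)).
  assert (Hy : a <= y < z) by (unfold y; split; [apply Rmax_l | apply Rmax_lub_lt; lra]).
  assert (Hyz : Rabs (y - z) < del).
  { apply Rabs_def1; unfold y, Rmax; destruct Rle_dec; lra. }
  specialize (Hball y Hyz). apply Rabs_def2 in Hball. specialize (Hlow y Hy). lra.
Qed.

Lemma increment_ge (g h : R -> R) (a b m : R) : a <= b ->
  (forall x, is_derive g x (h x)) -> (forall x, a <= x <= b -> m <= h x) ->
  m * (b - a) <= g b - g a.
Proof.
  intros Hab Hd Hm.
  destruct (MVT_gen g a b h) as [c [Hc ->]].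
  - intros x _. apply Hd.
  - intros x _. apply continuity_pt_filterlim. exact (continuous_of_is_derive g x _ (Hd x)).
  - rewrite Rmin_left, Rmax_right in Hc by lra.
    apply Rmult_le_compat_r; [lra | apply Hm; lra].
Qed.

Lemma increment_le (g h : R -> R) (a b m : R) : a <= b ->
  (forall x, is_derive g x (h x)) -> (forall x, a <= x <= b -> h x <= m) ->
  g b - g a <= m * (b - a).
Proof.
  intros Hab Hd Hm.
  pose proof (increment_ge (fun x => - g x) (fun x => - h x) a b (- m) Hab
    (fun x => is_derive_opp g x (h x) (Hd x)) ltac:(intros x Hx; specialize (Hm x Hx); lra)).
  lra.
Qed.

Lemma increment_second_order (g h : R -> R) (a b m : R) : a <= b ->
  (forall x, is_derive g x (h x)) ->
  (forall x, a <= x <= b -> h a + m * (x - a) <= h x) ->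
  h a * (b - a) + m * (b - a) ^ 2 / 2 <= g b - g a.
Proof.
  intros Hab Hd Hh.
  assert (Hq : forall x, is_derive (fun y => g y - h a * y - m * (y - a) ^ 2 / 2) x
                                  (h x - h a - m * (x - a))).
  { intros x. auto_derive; [exists (h x); apply Hd|].
    replace (Derive (fun y => g y) x) with (h x); [field|].
    symmetry; apply is_derive_unique, Hd. }
  pose proof (increment_ge _ _ a b 0 Hab Hq ltac:(intros x Hx; specialize (Hh x Hx); lra)).
  lra.
Qed.

Lemma strictly_increasing_of_pos_derivative (g h : R -> R) (a b x y : R) :
  (forall z, is_derive g z (h z)) -> (forall z, a < z < b -> 0 < h z) ->
  a <= x -> x < y -> y <= b -> g x < g y.
Proof.
  intros Hd Hpos Hax Hxy Hyb.
  destruct (MVT_cor2 g h x y Hxy) as [c [Heq Hc]].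
  - intros c _. apply is_derive_Reals, Hd.
  - assert (0 < h c) by (apply Hpos; lra). nra.
Qed.

Lemma derivative_zero_at_interior_min (g h : R -> R) (a b z : R) :
  (forall x, is_derive g x (h x)) -> a < z < b ->
  (forall x, a < x < b -> g z <= g x) -> h z = 0.
Proof.
  intros Hd Hz Hmin.
  pose proof (proj1 (is_derive_Reals g z (h z)) (Hd z)) as Hlim.
  exact (deriv_minimum g a b z (exist _ (h z) Hlim) (proj1 Hz) (proj2 Hz)
    (fun x Hax Hxb => Hmin x (conj Hax Hxb))).
Qed.

Lemma first_exit (P : R -> Prop) (a b : R) : P a ->
  (forall x, P x -> exists del, 0 < del /\ forall y, Rabs (y - x) < del -> P y) ->
  (exists x, a <= x <= b /\ ~ P x) ->
  exists z, a < z <= b /\ ~ P z /\ forall y, a <= y < z -> P y.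
Proof.
  intros Pa Hopen [x0 [Hx0 Hnx0]].
  set (S := fun x => a <= x <= b /\ forall y, a <= y <= x -> P y).
  assert (HSa : S a) by (split; [lra | intros y Hy; replace y with a by lra; exact Pa]).
  assert (HSx0 : forall x, S x -> x < x0).
  { intros x [_ Hx]. apply Rnot_le_lt. intros Hle. apply Hnx0, Hx. lra. }
  destruct (completeness S ltac:(exists x0; intros x Hx; left; apply HSx0, Hx)
                              ltac:(exists a; exact HSa)) as [z [Hub Hleast]].
  assert (Haz : a <= z) by (apply Hub, HSa).
  assert (Hzx0 : z <= x0) by (apply Hleast; intros x Hx; left; apply HSx0, Hx).
  assert (Hbefore : forall y, a <= y < z -> P y).
  { intros y Hy. apply NNPP. intros Hny.
    assert (Hyub : is_upper_bound S y).
    { intros x [Hx HxP]. apply Rnot_lt_le. intros Hyx. apply Hny, HxP. lra. }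
    specialize (Hleast y Hyub). lra. }
  assert (Hnz : ~ P z).
  { intros Pz. destruct (Hopen z Pz) as [del [Hdel Hball]].
    assert (Hzb : z < b) by (destruct (Req_dec z x0) as [-> | ]; [contradiction | lra]).
    set (w := Rmin (z + del / 2) b).
    assert (Hzw : z < w) by (unfold w; apply Rmin_glb_lt; lra).
    assert (HSw : S w).
    { split; [split; [lra | unfold w; apply Rmin_r] |].
      intros y Hy. destruct (Rlt_le_dec y z) as [Hyz | Hzy]; [apply Hbefore; lra |].
      apply Hball. apply Rabs_def1; unfold w in Hy; pose proof (Rmin_l (z + del / 2) b); lra. }
    specialize (Hub w HSw). lra. }
  exists z. split; [split; [|lra] | split; [exact Hnz | exact Hbefore]].
  destruct (Req_dec a z) as [<- | ]; [contradiction | lra].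
Qed.

Lemma is_derive_reflect (g h : R -> R) (x : R) :
  is_derive g (- x) (h (- x)) -> is_derive (fun y => g (- y)) x (- h (- x)).
Proof.
  intros H.
  assert (Hneg : is_derive (fun y : R => - y) x (-1)) by (auto_derive; auto).
  pose proof (is_derive_comp g (fun y => - y) x _ _ H Hneg) as Hc.
  replace (- h (- x)) with (-1 * h (- x)) by ring. exact Hc.
Qed.

Lemma continuous_reflect (h : R -> R) (x : R) :
  continuous h (- x) -> continuous (fun y => h (- y)) x.
Proof.
  intros H. apply (continuous_comp (fun y : R => - y) h); [|exact H].
  apply (continuous_of_is_derive _ x (-1)). auto_derive; auto.
Qed.

(* Starting from a point where |g| < nu and h > 0,
   the continuous h cannot pass from above m to below -m without g leaving
   (-nu, nu); hence h stays >= m until g reaches nu or the interval ends. *)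
Lemma barrier (g h : R -> R) (nu m a b : R) :
  a <= b -> 0 < m ->
  (forall x, is_derive g x (h x)) -> (forall x, continuous h x) ->
  (forall x, a <= x <= b -> Rabs (g x) < nu -> m < Rabs (h x)) ->
  0 < h a -> Rabs (g a) < nu ->
  exists p, a <= p <= b /\ (p = b \/ g p = nu) /\ forall x, a <= x <= p -> m <= h x.
Proof.
  intros Hab Hm Hd Hc Hcurv Hha Hga.
  assert (Hha' : m < h a) by (specialize (Hcurv a ltac:(lra) Hga); rewrite Rabs_pos_eq in Hcurv; lra).
  assert (Hga' := Rabs_def2 _ _ Hga).
  set (P := fun x => m < h x /\ g x < nu).
  assert (Hopen : forall x, P x -> exists del, 0 < del /\ forall y, Rabs (y - x) < del -> P y).
  { intros x [Hhx Hgx].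
    destruct (continuous_ball h x (h x - m) (Hc x) ltac:(lra)) as [d1 [Hd1 Hb1]].
    destruct (continuous_ball g x (nu - g x) (continuous_of_is_derive g x _ (Hd x)) ltac:(lra))
      as [d2 [Hd2 Hb2]].
    exists (Rmin d1 d2). split; [apply Rmin_glb_lt; lra |].
    intros y Hy. specialize (Hb1 y ltac:(pose proof (Rmin_l d1 d2); lra)).
    specialize (Hb2 y ltac:(pose proof (Rmin_r d1 d2); lra)).
    apply Rabs_def2 in Hb1, Hb2. split; lra. }
  destruct (classic (exists x, a <= x <= b /\ ~ P x)) as [Hexit | Hstay].
  - destruct (first_exit P a b ltac:(unfold P; split; lra) Hopen Hexit) as [z [Hz [HnPz Hbefore]]].
    assert (Hhz : m <= h z)
      by (apply (lower_bound_at_left_limit h a z); [apply Hc | lra | intros y Hy; apply (Hbefore y Hy)]).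
    assert (Hgz : g z <= nu).
    { pose proof (lower_bound_at_left_limit (fun x => - g x) a z (- nu)
        (continuous_opp g z (continuous_of_is_derive g z _ (Hd z))) ltac:(lra)
        ltac:(intros y Hy; destruct (Hbefore y Hy); lra)). lra. }
    assert (Hup : forall x, a <= x <= z -> m <= h x).
    { intros x Hx. destruct (Req_dec x z) as [-> | ]; [exact Hhz | left; apply Hbefore; lra]. }
    exists z. split; [lra | split; [right | exact Hup]].
    destruct (Req_dec (g z) nu) as [ | Hne]; [assumption | exfalso].
    pose proof (increment_ge g h a z m ltac:(lra) Hd Hup).
    assert (Hsmall : Rabs (g z) < nu) by (apply Rabs_def1; nra).
    specialize (Hcurv z ltac:(lra) Hsmall). rewrite Rabs_pos_eq in Hcurv by lra.
    apply HnPz. split; lra.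
  - exists b. split; [lra | split; [left; reflexivity |]].
    intros x Hx. apply NNPP. intros Hlt. apply Hstay. exists x. split; [lra |].
    intros [Hhx _]. lra.
Qed.

Lemma barrier_trapped_up (g h : R -> R) (nu m a b : R) :
  a <= b -> 0 < m ->
  (forall x, is_derive g x (h x)) -> (forall x, continuous h x) ->
  (forall x, a <= x <= b -> Rabs (g x) < nu -> m < Rabs (h x)) ->
  (forall x, a <= x <= b -> g x < nu) ->
  0 < h a -> Rabs (g a) < nu ->
  forall x, a <= x <= b -> m <= h x.
Proof.
  intros Hab Hm Hd Hc Hcurv Hbelow Hha Hga.
  destruct (barrier g h nu m a b Hab Hm Hd Hc Hcurv Hha Hga) as [p [Hp [[-> | Hgp] Hup]]].
  - exact Hup.
  - specialize (Hbelow p Hp). lra.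
Qed.

Lemma barrier_trapped_down (g h : R -> R) (nu m a b : R) :
  a <= b -> 0 < m ->
  (forall x, is_derive g x (h x)) -> (forall x, continuous h x) ->
  (forall x, a <= x <= b -> Rabs (g x) < nu -> m < Rabs (h x)) ->
  (forall x, a <= x <= b -> - nu < g x) ->
  h a < 0 -> Rabs (g a) < nu ->
  forall x, a <= x <= b -> h x <= - m.
Proof.
  intros Hab Hm Hd Hc Hcurv Habove Hha Hga x Hx.
  enough (m <= - h x) by lra.
  apply (barrier_trapped_up (fun y => - g y) (fun y => - h y) nu m a b Hab Hm
           (fun y => is_derive_opp g y (h y) (Hd y)) (fun y => continuous_opp h y (Hc y)));
    [ intros y Hy; rewrite !Rabs_Ropp; apply Hcurv, Hy
    | intros y Hy; specialize (Habove y Hy); lra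
    | lra | rewrite Rabs_Ropp; exact Hga | exact Hx ].
Qed.

Lemma barrier_trapped_left (g h : R -> R) (nu m a b : R) :
  a <= b -> 0 < m ->
  (forall x, is_derive g x (h x)) -> (forall x, continuous h x) ->
  (forall x, a <= x <= b -> Rabs (g x) < nu -> m < Rabs (h x)) ->
  (forall x, a <= x <= b -> - nu < g x) ->
  0 < h b -> Rabs (g b) < nu ->
  forall x, a <= x <= b -> m <= h x.
Proof.
  intros Hab Hm Hd Hc Hcurv Habove Hhb Hgb x Hx.
  enough (Hrefl : - h (- - x) <= - m) by (rewrite Ropp_involutive in Hrefl; lra).
  apply (barrier_trapped_down (fun y => g (- y)) (fun y => - h (- y)) nu m (- b) (- a)
           ltac:(lra) Hm (fun y => is_derive_reflect g h y (Hd (- y)))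
           (fun y => continuous_opp _ y (continuous_reflect h y (Hc (- y)))));
    [ intros y Hy Hsmall; rewrite Rabs_Ropp; apply Hcurv; [lra | exact Hsmall]
    | intros y Hy; apply Habove; lra
    | rewrite Ropp_involutive; lra
    | rewrite Ropp_involutive; exact Hgb
    | lra ].
Qed.

Lemma periodic_Z (F : R -> R) :
  (forall x, F (x + 1) = F x) -> forall x k, F (x + IZR k) = F x.
Proof.
  intros Hper x k. revert x. induction k as [| j IH | j IH] using Z.peano_ind.
  - intros x. now rewrite Rplus_0_r.
  - intros y. rewrite succ_IZR, <- Rplus_assoc, Hper. apply IH.
  - intros y. rewrite <- (Hper (y + IZR (Z.pred j))), <- (IH y).
    f_equal. unfold Z.pred. rewrite plus_IZR. simpl. ring.
Qed.

(* The derivative of a periodic function is periodic (uniqueness of the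
   derivative of x |-> F (x + k) = F x). *)
Lemma periodic_derivative (F F1 : R -> R) :
  (forall x k, F (x + IZR k) = F x) -> (forall x, is_derive F x (F1 x)) ->
  forall x k, F1 (x + IZR k) = F1 x.
Proof.
  intros Hper Hd x k.
  assert (Hshift : is_derive (fun y : R => y + IZR k) x 1) by (auto_derive; auto; ring).
  pose proof (is_derive_comp F (fun y => y + IZR k) x _ _ (Hd (x + IZR k)) Hshift) as Hcomp.
  apply (is_derive_ext _ F) in Hcomp; [| intros y; apply Hper].
  pose proof (is_derive_unique _ _ _ Hcomp) as Hunique.
  rewrite (is_derive_unique _ _ _ (Hd x)) in Hunique.
  rewrite Hunique. unfold scal; simpl; unfold mult; simpl. ring.
Qed.

Lemma normT_shift (x : R) (k : Z) : normT (x + IZR k) = normT x.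
Proof.
  assert (Hfrac : frac_part (x + IZR k) = frac_part x).
  { symmetry. apply (Int_part_frac_part_spec (x + IZR k) (Int_part x + k) (frac_part x)).
    - pose proof (base_fp x). lra.
    - rewrite plus_IZR. pose proof (Rplus_Int_part_frac_part x). lra. }
  unfold normT. now rewrite Hfrac.
Qed.

Lemma normT_le_abs (x : R) : normT x <= Rabs x.
Proof.
  unfold normT, frac_part. pose proof (base_Int_part x) as [H1 H2].
  destruct (Rle_dec 0 x).
  - rewrite Rabs_pos_eq by lra.
    assert (Hint : (-1 < Int_part x)%Z) by (apply lt_IZR; simpl; lra).
    assert (0 <= IZR (Int_part x)) by (apply IZR_le; lia).
    eapply Rle_trans; [apply Rmin_l | lra].
  - rewrite Rabs_left by lra.
    assert (Hint : (Int_part x < 0)%Z) by (apply lt_IZR; simpl; lra).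
    assert (IZR (Int_part x) <= -1) by (apply IZR_le; lia).
    eapply Rle_trans; [apply Rmin_r | lra].
Qed.

Lemma inArc_base (a b x : R) : a <= x <= b -> inArc a b x.
Proof. intros H. exists 0%Z. simpl. lra. Qed.

Lemma inArc_shift (a b x : R) (k : Z) : a <= x + IZR k <= b -> inArc a b x.
Proof. intros H. exists k. exact H. Qed.

Lemma inArc_opp (a b x : R) : inArc (- b) (- a) x <-> inArc a b (- x).
Proof. split; intros [k Hk]; exists (- k)%Z; rewrite opp_IZR; lra. Qed.

Lemma IZR_lt_step (k j : Z) : (k < j)%Z -> IZR k + 1 <= IZR j.
Proof. intros H. apply Z.le_succ_l, IZR_le in H. rewrite succ_IZR in H. exact H. Qed.

Lemma inArc_full (a b x : R) : 1 <= b - a -> inArc a b x.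
Proof.
  intros H. destruct (archimed (x - a)) as [H1 H2].
  exists (1 - up (x - a))%Z. rewrite minus_IZR. lra.
Qed.

Lemma not_inArc_gap (a b y : R) : b - a < 1 -> b < y < a + 1 -> ~ inArc a b y.
Proof.
  intros Hlen Hy [k Hk].
  destruct (Z.lt_total k 0) as [Hl | [-> | Hg]].
  - apply IZR_lt_step in Hl. simpl in Hl. lra.
  - simpl in Hk. lra.
  - apply IZR_lt_step in Hg. simpl in Hg. lra.
Qed.

Lemma inArc_closed_right (a b c del : R) : a <= b -> 0 < del ->
  (forall y, c < y < c + del -> inArc a b y) -> inArc a b c.
Proof.
  intros Hab Hdel Hnear.
  destruct (Rle_dec 1 (b - a)) as [Hfull | Hshort%Rnot_le_lt]; [apply inArc_full; lra |].
  destruct (archimed (c - a)) as [H1 H2].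
  set (k0 := (1 - up (c - a))%Z).
  assert (Hk0 : IZR k0 = 1 - IZR (up (c - a))) by (unfold k0; rewrite minus_IZR; reflexivity).
  destruct (Rle_dec (c + IZR k0) b) as [Hle | Hgt%Rnot_le_lt]; [exists k0; lra | exfalso].
  set (w := Rmin del (a + 1 - (c + IZR k0))).
  assert (Hw : 0 < w) by (apply Rmin_glb_lt; lra).
  assert (Hwdel : w <= del) by apply Rmin_l.
  assert (Hwgap : w <= a + 1 - (c + IZR k0)) by apply Rmin_r.
  apply (not_inArc_gap a b (c + w / 2 + IZR k0)); [lra | lra |].
  destruct (Hnear (c + w / 2) ltac:(lra)) as [k Hk].
  exists (k - k0)%Z. rewrite minus_IZR. lra.
Qed.

(* With t = nu / m, the slope needs time at least t to
   change by nu. *)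
Section NonnegativeSlope.

Variables (F F1 F2 : R -> R) (nu m c e : R).
Hypothesis HF1 : forall x, is_derive F x (F1 x).
Hypothesis HF2 : forall x, is_derive F1 x (F2 x).
Hypothesis HF2c : forall x, continuous F2 x.
Hypothesis Hnu : 0 < nu.
Hypothesis Hnum : nu < m.
Hypothesis Hnonneg : forall x, c <= x <= e -> 0 <= F1 x.
Hypothesis Hcurv : forall x, c <= x <= e -> Rabs (F1 x) < nu -> m < Rabs (F2 x).

(* The slope can only vanish at the ends: an interior zero would be an
   interior minimum of F1, so F2 = 0 there, against the curvature bound. *)
Lemma slope_pos_interior (z : R) : c < z < e -> 0 < F1 z.
Proof.
  intros Hz. destruct (Hnonneg z ltac:(lra)) as [Hpos | Hzero]; [exact Hpos | exfalso].
  assert (Hcrit : F2 z = 0).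
  { apply (derivative_zero_at_interior_min F1 F2 c e z HF2 Hz).
    intros x Hx. rewrite <- Hzero. apply Hnonneg. lra. }
  pose proof (Hcurv z ltac:(lra) ltac:(rewrite <- Hzero, Rabs_R0; exact Hnu)) as Hbig.
  rewrite Hcrit, Rabs_R0 in Hbig. lra.
Qed.

Lemma injective_on_interval (x y : R) :
  c <= x <= e -> c <= y <= e -> F x = F y -> x = y.
Proof.
  intros Hx Hy Hxy.
  destruct (Rtotal_order x y) as [Hlt | [Heq | Hgt]]; [exfalso | exact Heq | exfalso].
  - pose proof (strictly_increasing_of_pos_derivative F F1 c e x y HF1 slope_pos_interior
      ltac:(lra) Hlt ltac:(lra)). lra.
  - pose proof (strictly_increasing_of_pos_derivative F F1 c e y x HF1 slope_pos_interior
      ltac:(lra) Hgt ltac:(lra)). lra.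
Qed.

(* Once the slope has reached nu at p, it stays >= nu for a time t / 2:
   a dip below nu at y would force the slope to fall at rate m, either
   backwards to p (if F2 y > 0) or forwards to below 0 (if F2 y < 0). *)
Lemma slope_plateau (p : R) :
  c <= p -> p + 3 / 2 * (nu / m) < e -> F1 p = nu ->
  forall y, p <= y <= p + nu / m / 2 -> nu <= F1 y.
Proof.
  intros Hcp Hpe Hp y Hy.
  assert (Hm : 0 < m) by lra.
  assert (Ht : m * (nu / m) = nu) by (field; lra).
  assert (Htpos : 0 < nu / m) by (apply Rdiv_lt_0_compat; lra).
  apply Rnot_lt_le. intros Hlow.
  assert (Hyp : p < y) by (destruct (Req_dec y p) as [-> | ]; lra).
  assert (Hypos : 0 < F1 y) by (apply slope_pos_interior; lra).
  assert (Hsmall : Rabs (F1 y) < nu) by (rewrite Rabs_pos_eq; lra).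
  assert (Hcurv_on : forall a b, c <= a -> b <= e ->
            forall x, a <= x <= b -> Rabs (F1 x) < nu -> m < Rabs (F2 x))
    by (intros a b Ha Hb x Hx; apply Hcurv; lra).
  assert (Habove : forall a b, c <= a -> b <= e -> forall x, a <= x <= b -> - nu < F1 x)
    by (intros a b Ha Hb x Hx; specialize (Hnonneg x ltac:(lra)); lra).
  pose proof (Hcurv y ltac:(lra) Hsmall) as Hbig.
  destruct (Rlt_or_le 0 (F2 y)) as [Hup | Hdown].
  - pose proof (increment_ge F1 F2 p y m ltac:(lra) HF2
      (barrier_trapped_left F1 F2 nu m p y ltac:(lra) Hm HF2 HF2c
         (Hcurv_on p y Hcp ltac:(lra)) (Habove p y Hcp ltac:(lra)) Hup Hsmall)).
    nra.
  - assert (Hneg : F2 y < 0) by (rewrite Rabs_left1 in Hbig by lra; lra).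
    pose proof (increment_le F1 F2 y (y + nu / m) (- m) ltac:(lra) HF2
      (barrier_trapped_down F1 F2 nu m y (y + nu / m) ltac:(lra) Hm HF2 HF2c
         (Hcurv_on y (y + nu / m) ltac:(lra) ltac:(lra))
         (Habove y (y + nu / m) ltac:(lra) ltac:(lra)) Hneg Hsmall)).
    pose proof (slope_pos_interior (y + nu / m) ltac:(lra)). nra.
Qed.

(* Either the slope grows at
   rate m for the whole time 5/2 t, or it reaches nu within time t and then
   keeps the value nu for a further time t / 2. *)
Lemma climb_from_critical_point :
  F1 c = 0 -> 0 < F2 c -> c + 5 / 2 * (nu / m) < e ->
  exists q, c <= q <= c + 5 / 2 * (nu / m) /\ nu * (nu / m) / 2 <= F q - F c.
Proof.
  intros Hc0 Hc2 Hce.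
  assert (Hm : 0 < m) by lra.
  assert (Ht : m * (nu / m) = nu) by (field; lra).
  assert (Htpos : 0 < nu / m) by (apply Rdiv_lt_0_compat; lra).
  destruct (barrier F1 F2 nu m c (c + 5 / 2 * (nu / m)) ltac:(lra) Hm HF2 HF2c
              ltac:(intros x Hx; apply Hcurv; lra) Hc2
              ltac:(rewrite Hc0, Rabs_R0; exact Hnu))
    as [p [Hp [Hend Hup]]].
  assert (Hgrow : forall x, c <= x <= p -> F1 c + m * (x - c) <= F1 x).
  { intros x Hx. pose proof (increment_ge F1 F2 c x m ltac:(lra) HF2
      ltac:(intros y Hy; apply Hup; lra)). lra. }
  pose proof (increment_second_order F F1 c p m ltac:(lra) HF1 Hgrow) as Hgain.
  rewrite Hc0 in Hgain.
  destruct Hend as [-> | Hpnu].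
  - exists (c + 5 / 2 * (nu / m)). split; [lra |].
    replace (c + 5 / 2 * (nu / m) - c) with (5 / 2 * (nu / m)) in Hgain by ring. nra.
  - assert (Hpc : m * (p - c) <= nu) by (specialize (Hgrow p ltac:(lra)); lra).
    assert (Hpt : p - c <= nu / m) by (apply (Rmult_le_reg_l m); lra).
    pose proof (increment_ge F F1 p (p + nu / m / 2) nu ltac:(lra) HF1
      (slope_plateau p ltac:(lra) ltac:(lra) Hpnu)).
    exists (p + nu / m / 2). split; [lra |].
    assert (0 <= m * (p - c) ^ 2) by (apply Rmult_le_pos; [lra | apply pow2_ge_0]).
    lra.
Qed.

End NonnegativeSlope.

(* The configuration of the lemma on the circle, in terms of lifts: two
   arcs A = [am, bm] and B = [ap, bp] of length at most 1, a 1-periodic C^2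
   function F with slope F1 <= 0 on A and >= 0 on B, and, on A u B, the
   curvature estimate |F2| > m wherever |F1| < nu; moreover points of A u B
   with |F1| < nu are interior points of A u B (hypothesis (3)). *)
Record Setting (am bm ap bp : R) (F F1 F2 : R -> R) (nu m : R) : Prop := {
  arcA_length : am <= bm <= am + 1;
  arcB_length : ap <= bp <= ap + 1;
  periodic : forall x k, F (x + IZR k) = F x;
  deriv_F : forall x, is_derive F x (F1 x);
  deriv_F1 : forall x, is_derive F1 x (F2 x);
  cont_F2 : forall x, continuous F2 x;
  slope_A : forall x, inArc am bm x -> F1 x <= 0;
  slope_B : forall x, inArc ap bp x -> 0 <= F1 x;
  curvature : forall x, inI am bm ap bp x -> Rabs (F1 x) < nu -> m < Rabs (F2 x);
  interior : forall x, inI am bm ap bp x -> Rabs (F1 x) < nu ->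
               exists eps, 0 < eps /\ forall y, Rabs (y - x) < eps -> inI am bm ap bp y;
  nu_pos : 0 < nu;
  nu_lt_m : nu < m }.

(* The configuration is invariant under x |-> - x, F |-> - F (- x), which
   keeps the roles of A and B and reverses the sign of the curvature ... *)
Lemma setting_mirror {am bm ap bp nu m : R} {F F1 F2 : R -> R} :
  Setting am bm ap bp F F1 F2 nu m ->
  Setting (- bm) (- am) (- bp) (- ap) (fun x => - F (- x)) (fun x => F1 (- x))
          (fun x => - F2 (- x)) nu m.
Proof.
  intros [HA HB Hper HF1 HF2 HF2c HslA HslB Hcurv Hint Hnu Hnum].
  assert (Hin : forall x, inI (- bm) (- am) (- bp) (- ap) x <-> inI am bm ap bp (- x))
    by (intros x; unfold inI; rewrite !inArc_opp; tauto).
  constructor; try lra.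
  - intros x k. replace (- (x + IZR k)) with (- x + IZR (- k)) by (rewrite opp_IZR; ring).
    now rewrite Hper.
  - intros x. replace (F1 (- x)) with (- - F1 (- x)) by ring.
    exact (is_derive_opp (fun y => F (- y)) x _ (is_derive_reflect F F1 x (HF1 (- x)))).
  - intros x. exact (is_derive_reflect F1 F2 x (HF2 (- x))).
  - intros x. exact (continuous_opp (fun y => F2 (- y)) x (continuous_reflect F2 x (HF2c (- x)))).
  - intros x Hx. apply HslA, inArc_opp, Hx.
  - intros x Hx. apply HslB, inArc_opp, Hx.
  - intros x Hx Hsmall. rewrite Rabs_Ropp. apply Hcurv; [apply Hin |]; assumption.
  - intros x Hx Hsmall.
    destruct (Hint (- x) (proj1 (Hin x) Hx) Hsmall) as [eps [Heps Hball]].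
    exists eps. split; [exact Heps |]. intros y Hy. apply Hin, Hball.
    replace (- y - - x) with (- (y - x)) by ring. now rewrite Rabs_Ropp.
Qed.

(* ... and under x |-> - x, F |-> F (- x), which exchanges A and B. *)
Lemma setting_swap {am bm ap bp nu m : R} {F F1 F2 : R -> R} :
  Setting am bm ap bp F F1 F2 nu m ->
  Setting (- bp) (- ap) (- bm) (- am) (fun x => F (- x)) (fun x => - F1 (- x))
          (fun x => F2 (- x)) nu m.
Proof.
  intros [HA HB Hper HF1 HF2 HF2c HslA HslB Hcurv Hint Hnu Hnum].
  assert (Hin : forall x, inI (- bp) (- ap) (- bm) (- am) x <-> inI am bm ap bp (- x))
    by (intros x; unfold inI; rewrite !inArc_opp; tauto).
  constructor; try lra.
  - intros x k. replace (- (x + IZR k)) with (- x + IZR (- k)) by (rewrite opp_IZR; ring).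
    now rewrite Hper.
  - intros x. exact (is_derive_reflect F F1 x (HF1 (- x))).
  - intros x. replace (F2 (- x)) with (- - F2 (- x)) by ring.
    exact (is_derive_opp (fun y => F1 (- y)) x _ (is_derive_reflect F1 F2 x (HF2 (- x)))).
  - intros x. exact (continuous_reflect F2 x (HF2c (- x))).
  - intros x Hx. specialize (HslB (- x) (proj1 (inArc_opp _ _ _) Hx)). lra.
  - intros x Hx. specialize (HslA (- x) (proj1 (inArc_opp _ _ _) Hx)). lra.
  - intros x Hx Hsmall. apply Hcurv; [apply Hin | rewrite <- Rabs_Ropp]; assumption.
  - intros x Hx Hsmall.
    destruct (Hint (- x) (proj1 (Hin x) Hx) ltac:(rewrite <- Rabs_Ropp; exact Hsmall))
      as [eps [Heps Hball]].
    exists eps. split; [exact Heps |]. intros y Hy. apply Hin, Hball.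
    replace (- y - - x) with (- (y - x)) by ring. now rewrite Rabs_Ropp.
Qed.

Section SmallSlopeInA.

Context {am bm ap bp nu m : R} {F F1 F2 : R -> R}.
Hypothesis S : Setting am bm ap bp F F1 F2 nu m.

(* Going right from s, the slope increases at rate m while staying <= 0 on
   A, so A is a proper arc, its right end bm is reached within time t, the
   slope there is still small and the curvature positive, and F has dropped
   by less than nu * t / 2. *)
Lemma exit_through_right_end (s : R) :
  am <= s <= bm -> Rabs (F1 s) < nu -> 0 < F2 s ->
  bm - am < 1 /\ bm - s < nu / m /\ Rabs (F1 bm) < nu /\ m <= F2 bm /\
  F s - F bm < nu * (nu / m) / 2.
Proof.
  intros Hs Hs1 Hs2.
  destruct S as [HA HB Hper HF1 HF2 HF2c HslA HslB Hcurv Hint Hnu Hnum].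
  assert (Hm : 0 < m) by lra.
  assert (Ht : m * (nu / m) = nu) by (field; lra).
  assert (Htpos : 0 < nu / m) by (apply Rdiv_lt_0_compat; lra).
  pose proof (Rabs_def2 _ _ Hs1) as Hs1'.
  assert (HcurvA : forall x, inArc am bm x -> Rabs (F1 x) < nu -> m < Rabs (F2 x))
    by (intros x Hx; apply Hcurv; left; exact Hx).
  assert (HbelowA : forall x, inArc am bm x -> F1 x < nu) by (intros x Hx; specialize (HslA x Hx); lra).
  assert (Hshort : bm - am < 1).
  { apply Rnot_le_lt. intros Hfull.
    assert (Hall : forall x, inArc am bm x) by (intros x; apply inArc_full; lra).
    pose proof (increment_ge F1 F2 s (s + 2 * (nu / m)) m ltac:(lra)
      HF2 (barrier_trapped_up F1 F2 nu m s (s + 2 * (nu / m)) ltac:(lra)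
             Hm HF2 HF2c (fun x _ => HcurvA x (Hall x)) (fun x _ => HbelowA x (Hall x)) Hs2 Hs1)).
    specialize (HslA _ (Hall (s + 2 * (nu / m)))).
    replace (m * (s + 2 * (nu / m) - s)) with (2 * nu) in H by (field; lra). lra. }
  assert (Hup : forall x, s <= x <= bm -> m <= F2 x).
  { apply (barrier_trapped_up F1 F2 nu m s bm ltac:(lra) Hm HF2 HF2c); try assumption;
      intros x Hx; [apply HcurvA | apply HbelowA]; apply inArc_base; lra. }
  assert (Hgrow : forall x, s <= x <= bm -> F1 s + m * (x - s) <= F1 x).
  { intros x Hx. pose proof (increment_ge F1 F2 s x m ltac:(lra) HF2
      ltac:(intros y Hy; apply Hup; lra)). lra. }
  pose proof (increment_second_order F F1 s bm m ltac:(lra) HF1 Hgrow) as Hdrop.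
  pose proof (Hgrow bm ltac:(lra)) as Hgrow_bm.
  pose proof (HslA bm (inArc_base am bm bm ltac:(lra))) as Hbm.
  repeat split; try lra.
  - apply (Rmult_lt_reg_l m); lra.
  - apply Rabs_def1; nra.
  - apply Hup; lra.
  - assert (Hsq : 0 <= (m * (bm - s) + F1 s) ^ 2) by apply pow2_ge_0.
    assert (Hsmall : F1 s ^ 2 < nu ^ 2) by nra.
    apply (Rmult_lt_reg_l (2 * m)); [lra |].
    replace (2 * m * (nu * (nu / m) / 2)) with (nu ^ 2) by (field; lra).
    nra.
Qed.

(* The right end of A is the left end of (a lift of) B: just beyond bm lie
   points of A u B (hypothesis (3)) not in A, hence in B, and B is closed;
   were bm interior to B, the slope would be negative just left of bm. *)
Lemma right_end_starts_B :
  bm - am < 1 -> Rabs (F1 bm) < nu -> 0 < F2 bm -> exists k, bm + IZR k = ap.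
Proof.
  intros Hshort Hsmall Hpos.
  destruct S as [HA HB Hper HF1 HF2 HF2c HslA HslB Hcurv Hint Hnu Hnum].
  destruct (Hint bm (or_introl (inArc_base am bm bm ltac:(lra))) Hsmall) as [eps [Heps Hball]].
  assert (Hright : forall y, bm < y < bm + Rmin eps (am + 1 - bm) -> inArc ap bp y).
  { intros y Hy. pose proof (Rmin_l eps (am + 1 - bm)). pose proof (Rmin_r eps (am + 1 - bm)).
    destruct (Hball y ltac:(apply Rabs_def1; lra)) as [HyA | HyB]; [exfalso | exact HyB].
    exact (not_inArc_gap am bm y Hshort ltac:(lra) HyA). }
  destruct (inArc_closed_right ap bp bm (Rmin eps (am + 1 - bm)) ltac:(lra)
              ltac:(apply Rmin_glb_lt; lra) Hright) as [k Hk].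
  exists k. apply Rle_antisym; [apply Rnot_lt_le; intros Hinside | lra].
  destruct (continuous_ball F2 bm (F2 bm) (HF2c bm) Hpos) as [del [Hdel Hnear]].
  set (u := Rmin del (bm + IZR k - ap) / 2).
  assert (Hu : 0 < u) by (apply Rdiv_lt_0_compat; [apply Rmin_glb_lt |]; lra).
  assert (Hudel : u < del) by (pose proof (Rmin_l del (bm + IZR k - ap)); unfold u; lra).
  assert (Hugap : u < bm + IZR k - ap) by (pose proof (Rmin_r del (bm + IZR k - ap)); unfold u; lra).
  assert (Hincr : F1 (bm - u) < F1 bm).
  { apply (strictly_increasing_of_pos_derivative F1 F2 (bm - del) (bm + del)); try lra; [exact HF2 |].
    intros z Hz. specialize (Hnear z ltac:(apply Rabs_def1; lra)). apply Rabs_def2 in Hnear. lra. }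
  pose proof (HslB (bm - u) (inArc_shift ap bp (bm - u) k ltac:(lra))).
  pose proof (HslA bm (inArc_base am bm bm ltac:(lra))). lra.
Qed.

(* From bm = ap - k the lift [bm, bp - k] of B starts at a critical point of F.
   If it is short, its right end already lies above F s; otherwise F climbs
   by nu * t / 2 > F s - F bm within time 5/2 t.  In both cases the
   intermediate value theorem gives the partner preimage. *)
Lemma close_preimage_in_B (s : R) :
  am <= s <= bm -> Rabs (F1 s) < nu -> 0 < F2 s -> F s <= F bp ->
  exists q k, Rabs (q - s) < 7 / 2 * (nu / m) /\ F q = F s /\ ap <= q + IZR k <= bp.
Proof.
  intros Hs Hs1 Hs2 Htop.
  destruct (exit_through_right_end s Hs Hs1 Hs2) as [Hshort [Hbms [Hbm1 [Hbm2 Hdrop]]]].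
  destruct (right_end_starts_B Hshort Hbm1 ltac:(destruct S; lra)) as [k Hk].
  destruct S as [HA HB Hper HF1 HF2 HF2c HslA HslB Hcurv Hint Hnu Hnum].
  set (e := bp - IZR k).
  assert (HBlift : forall x, bm <= x <= e -> inArc ap bp x)
    by (intros x Hx; apply (inArc_shift _ _ _ k); unfold e in Hx; lra).
  assert (Hcrit : F1 bm = 0).
  { apply Rle_antisym; [apply HslA, inArc_base | apply HslB, HBlift]; unfold e; lra. }
  assert (Htpos : 0 < nu / m) by (apply Rdiv_lt_0_compat; lra).
  assert (Hhigh : exists q, bm <= q <= e /\ q <= bm + 5 / 2 * (nu / m) /\ F s <= F q).
  { destruct (Rle_lt_dec e (bm + 5 / 2 * (nu / m))) as [Hclose | Hfar].
    - exists e. split; [unfold e; lra | split; [exact Hclose |]].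
      unfold e. replace (bp - IZR k) with (bp + IZR (- k)) by (rewrite opp_IZR; ring).
      now rewrite Hper.
    - destruct (climb_from_critical_point F F1 F2 nu m bm e HF1 HF2 HF2c Hnu Hnum
                  (fun x Hx => HslB x (HBlift x Hx))
                  (fun x Hx => Hcurv x (or_intror (HBlift x Hx))) Hcrit ltac:(lra) Hfar)
        as [q [Hq Hgain]].
      exists q. repeat split; lra. }
  destruct Hhigh as [q [Hq [Hqs Hqhigh]]].
  assert (Hdesc : F bm <= F s).
  { pose proof (increment_le F F1 s bm 0 ltac:(lra) HF1
      (fun x Hx => HslA x (inArc_base am bm x ltac:(lra)))). lra. }
  assert (HFcont : continuity F)
    by (intros x; apply continuity_pt_filterlim, (continuous_of_is_derive F x _ (HF1 x))).
  destruct (IVT_gen F bm q (F s) HFcont) as [q' [Hq' HFq']].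
  { rewrite Rmin_left, Rmax_right; lra. }
  rewrite Rmin_left, Rmax_right in Hq' by lra.
  exists q', k. split; [rewrite Rabs_pos_eq; lra | split; [exact HFq' | unfold e in Hq; lra]].
Qed.

End SmallSlopeInA.

(* The same conclusion without a sign condition on the curvature: a small
   slope forces |F2 s| > m, and the case F2 s < 0 is the mirror image. *)
Lemma close_preimage_in_B_any {am bm ap bp nu m : R} {F F1 F2 : R -> R} {s : R} :
  Setting am bm ap bp F F1 F2 nu m ->
  am <= s <= bm -> Rabs (F1 s) < nu -> F ap <= F s <= F bp ->
  exists q k, Rabs (q - s) < 7 / 2 * (nu / m) /\ F q = F s /\ ap <= q + IZR k <= bp.
Proof.
  intros S Hs Hs1 Hrange.
  assert (Hbig : m < Rabs (F2 s))
    by (destruct S as [_ _ _ _ _ _ _ _ Hcurv _ _ _]; exact (Hcurv s (or_introl (inArc_base am bm s Hs)) Hs1)).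
  assert (Hm : 0 < m) by (destruct S; lra).
  destruct (Rlt_or_le 0 (F2 s)) as [Hpos | Hneg].
  - exact (close_preimage_in_B S s Hs Hs1 Hpos ltac:(lra)).
  - rewrite Rabs_left1 in Hbig by exact Hneg.
    pose proof (close_preimage_in_B (setting_mirror S) (- s)) as Hmirror.
    cbv beta in Hmirror. rewrite !Ropp_involutive in Hmirror.
    destruct Hmirror as [q [k [Hq [HFq Hqk]]]]; [lra | exact Hs1 | lra | lra |].
    exists (- q), (- k)%Z. rewrite opp_IZR. split; [| split; [lra | lra]].
    replace (- q - s) with (- (q - - s)) by ring. now rewrite Rabs_Ropp.
Qed.

Lemma slope_at_root_in_A {am bm ap bp nu m : R} {F F1 F2 : R -> R} {s theta : R} :
  Setting am bm ap bp F F1 F2 nu m ->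
  am <= s <= bm -> ap <= theta <= bp -> F s = F theta -> F ap <= F s <= F bp ->
  7 / 2 * (nu / m) <= normT (theta - s) -> nu <= Rabs (F1 s).
Proof.
  intros S Hs Htheta Hroots Hrange Hfar.
  apply Rnot_lt_le. intros Hs1.
  destruct (close_preimage_in_B_any S Hs Hs1 Hrange) as [q [k [Hq [HFq Hqk]]]].
  destruct S as [HA HB Hper HF1 HF2 HF2c HslA HslB Hcurv Hint Hnu Hnum].
  assert (Hpartner : q + IZR k = theta).
  { apply (injective_on_interval F F1 F2 nu m ap bp HF1 HF2 Hnu Hnum
             (fun x Hx => HslB x (inArc_base ap bp x Hx))
             (fun x Hx => Hcurv x (or_intror (inArc_base ap bp x Hx)))); try assumption.
    now rewrite Hper, HFq. }
  replace (theta - s) with ((q - s) + IZR k) in Hfar by lra.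
  rewrite normT_shift in Hfar. pose proof (normT_le_abs (q - s)). lra.
Qed.

Lemma interior_of_small_slope (am bm ap bp nu x : R) (F1 : R -> R) :
  (forall y, bdI am bm ap bp y -> nu <= Rabs (F1 y)) ->
  inI am bm ap bp x -> Rabs (F1 x) < nu ->
  exists eps, 0 < eps /\ forall y, Rabs (y - x) < eps -> inI am bm ap bp y.
Proof.
  intros H3 Hx Hsmall. apply NNPP. intros Hnot.
  assert (Hbd : bdI am bm ap bp x).
  { split; [exact Hx |]. intros eps Heps. apply NNPP. intros Hno. apply Hnot.
    exists eps. split; [exact Heps |]. intros y Hy. apply NNPP. intros Hny. apply Hno.
    exists y. split; assumption. }
  specialize (H3 x Hbd). lra.
Qed.

Lemma crossing_budget (d nu : R) : 0 < nu -> nu < d / 2 -> 7 / 2 * (nu / (d - nu)) <= 7 * nu / d.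
Proof.
  intros Hnu Hnud.
  apply (Rmult_le_reg_r (2 * d * (d - nu))); [apply Rmult_lt_0_compat; lra |].
  replace (7 / 2 * (nu / (d - nu)) * (2 * d * (d - nu))) with (7 * nu * d) by (field; lra).
  replace (7 * nu / d * (2 * d * (d - nu))) with (14 * nu * (d - nu)) by (field; lra).
  nra.
Qed.

Theorem lemma4p3
  (am bm ap bp jl jr d D nu : R)
  (F F1 F2 : R -> R)
  (Hm : am <= bm) (Hm1 : bm - am <= 1)
  (Hp : ap <= bp) (Hp1 : bp - ap <= 1)
  (Hdisj : forall x : R, ~ (inArcInt am bm x /\ inArcInt ap bp x))
  (HJ : jl <= jr)
  (Hper : forall x : R, F (x + 1) = F x)
  (HF1 : forall x : R, is_derive F x (F1 x))
  (HF2 : forall x : R, is_derive F1 x (F2 x))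
  (HF2c : forall x : R, continuous F2 x)
  (Hmon_m : forall x : R, am <= x <= bm -> F1 x <= 0)
  (Hmon_p : forall x : R, ap <= x <= bp -> 0 <= F1 x)
  (Hd : 0 < d) (HdD : d <= D) (Hnu : 0 < nu) (Hnud : nu < d / 2)
  (H1 : forall x : R, inI am bm ap bp x ->
          d <= Rabs (F1 x) + Rabs (F2 x) <= D)
  (H2m_in : forall x : R, am <= x <= bm -> jl <= F x <= jr)
  (H2m_onto : forall E : R, jl <= E <= jr -> exists x : R, am <= x <= bm /\ F x = E)
  (H2p_in : forall x : R, ap <= x <= bp -> jl <= F x <= jr)
  (H2p_onto : forall E : R, jl <= E <= jr -> exists x : R, ap <= x <= bp /\ F x = E)
  (H3 : forall x : R, bdI am bm ap bp x -> nu <= Rabs (F1 x))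
  (Es thm thp : R)
  (HEs : jl <= Es <= jr)
  (Hthm : am <= thm <= bm) (Hthp : ap <= thp <= bp)
  (HEm : F thm = Es) (HEp : F thp = Es)
  (HT : 7 * nu / d <= normT (thp - thm)) :
  nu <= Rabs (F1 thm) /\ nu <= Rabs (F1 thp).
Proof.
  pose proof (periodic_Z F Hper) as HperZ.
  pose proof (periodic_derivative F F1 HperZ HF1) as Hper1.
  assert (S : Setting am bm ap bp F F1 F2 nu (d - nu)).
  { constructor; try assumption; try lra.
    - intros x [k Hk]. rewrite <- (Hper1 x k). apply Hmon_m, Hk.
    - intros x [k Hk]. rewrite <- (Hper1 x k). apply Hmon_p, Hk.
    - intros x Hx Hsmall. specialize (H1 x Hx). lra.
    - intros x. apply interior_of_small_slope, H3. }
  (* F maps A decreasingly and B increasingly onto J, so Es lies between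
     the values of F at the ends of both arcs. *)
  destruct (H2p_onto Es HEs) as [xp [Hxp HFxp]].
  destruct (H2m_onto Es HEs) as [xm [Hxm HFxm]].
  pose proof (increment_ge F F1 ap xp 0 ltac:(lra) HF1 ltac:(intros; apply Hmon_p; lra)).
  pose proof (increment_ge F F1 xp bp 0 ltac:(lra) HF1 ltac:(intros; apply Hmon_p; lra)).
  pose proof (increment_le F F1 am xm 0 ltac:(lra) HF1 ltac:(intros; apply Hmon_m; lra)).
  pose proof (increment_le F F1 xm bm 0 ltac:(lra) HF1 ltac:(intros; apply Hmon_m; lra)).
  pose proof (crossing_budget d nu Hnu Hnud) as Hbudget.
  split.
  - apply (slope_at_root_in_A S Hthm Hthp); lra.
  - pose proof (slope_at_root_in_A (s := - thp) (theta := - thm) (setting_swap S)) as Hswap.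
    cbv beta in Hswap. rewrite !Ropp_involutive, Rabs_Ropp in Hswap.
    apply Hswap; try lra.
    replace (- thm - - thp) with (thp - thm) by ring. lra.
Qed.
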